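(* Let $\mathcal{H}$ be a finite-dimensional complex Hilbert space and let $V_1, \dots, V_n$ be linear operators on $\mathcal{H}$ that mutually commute, i.e. $V_\alpha V_\beta = V_\beta V_\alpha$ for all $\alpha, \beta \in \{1,\dots,n\}$. Suppose that $$\sum_{\alpha=1}^n V_\alpha^* V_\alpha = \mathrm{Id}.$$ Then each $V_\alpha$ is normal, i.e. $V_\alpha V_\alpha^* = V_\alpha^* V_\alpha$. In particular, $V_1,\dots,V_n$ are simultaneously diagonalizable: there exists an orthonormal basis of $\mathcal{H}$ consisting of joint eigenvectors of all $V_\alpha$.
   Context: $V^*$ denotes the Hermitian adjoint of $V$. *)

From HB Require Import structures.
From mathcomp Require Import all_boot all_order all_algebra.
Set Implicit Arguments.
Unset Strict Implicit.
Unset Printing Implicit Defensive.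

(* By Schur's theorem for commuting families (cotrigonalization in
   the library) there is a unitary P making every T_a := P V_a P^* lower
   triangular; the T_a still commute and still satisfy sum_a T_a^* T_a = Id.
   For indices k and j put e_kj := (T_a k j)_a, a vector of C^n.  The
   identity sum_a T_a^* T_a = Id says sum_k <e_kj, e_ki> = delta_ij.  We show
   that every column of every T_a is zero off the diagonal, by downward
   induction on the column index j: for k > j, the vectors a := e_kk,
   b := e_jj and w := e_kj satisfy |a| = 1, <a, w> = 0 and
   |b|^2 + |w|^2 <= 1, while commutativity forces w to be collinear with
   a - b; these facts alone force w = 0 (lemma [rank_one_defect_eq0]).
   Hence each T_a is diagonal, so V_a = P^* T_a P is normal and the columns
   of P^* form an orthonormal basis of joint eigenvectors. *)

From HB Require Import structures.
From mathcomp Require Import all_boot all_order all_algebra.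
From mathcomp Require Import ring zify.
Import Order.TTheory GRing.Theory Num.Theory.
Local Open Scope ring_scope.
Local Open Scope sesquilinear_scope.

Local Notation "''[' u , v ]" := (dotmx u v) : ring_scope.
Local Notation "''[' u ]" := (dotmx u u) : ring_scope.

Section RankOneDefect.
Context {C : numClosedFieldType} {n : nat}.
Implicit Types u v a b w : 'rV[C]_n.

Lemma dotmx_conj u v : '[u, v]^* = '[v, u].
Proof. by rewrite (hermC (@dotmx C n)) expr0 mul1r conjCK. Qed.

Lemma collinear_scale u v :
  (forall i j, u 0 i * v 0 j = u 0 j * v 0 i) -> '[v] *: u = '[u, v] *: v.
Proof.
move=> uv; apply/rowP => j; rewrite !mxE !dotmxE !mxE mulr_suml mulr_suml.
apply: eq_bigr => i _; rewrite !mxE.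
by rewrite [RHS]mulrAC uv [LHS]mulrC mulrA.
Qed.

(* Core estimate: a unit vector a, a vector w orthogonal to a and collinear
   with a - b, and |b|^2 + |w|^2 <= 1 force w = 0.  Indeed, either a = b and
   then |w|^2 <= 1 - |a|^2 = 0, or <b, a> = 1 and then
   |a - b|^2 + |w|^2 = |b|^2 + |w|^2 - 1 <= 0. *)
Lemma rank_one_defect_eq0 a b w :
  '[a] = 1 -> '[a, w] = 0 -> '[b] + '[w] <= 1 ->
  (forall i j, w 0 i * (a 0 j - b 0 j) = w 0 j * (a 0 i - b 0 i)) -> w = 0.
Proof.
move=> a1 aw0 bw_le1 w_coll; set d := a - b.
have d_le : '[d] + '[w] <= 0 -> w = 0.
  move=> le0; apply/eqP; rewrite -(dnorm_eq0 (@dotmx C n)) eq_le.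
  rewrite (dnorm_ge0 (@dotmx C n)) andbT; apply: le_trans le0.
  by rewrite lerDr (dnorm_ge0 (@dotmx C n)).
have col : '[d] *: w = '[w, d] *: d.
  by apply: collinear_scale => i j; rewrite !mxE; exact: w_coll.
have wa0 : '[w, a] = 0 by rewrite -dotmx_conj aw0 conjC0.
have : '[w, d] * '[d, a] = 0.
  by have := congr1 (fun u => '[u, a]) col; rewrite !linearZl /= wa0 mulr0 => <-.
move/eqP; rewrite mulf_eq0 => /orP[/eqP wd0 | /eqP da0].
  move: col; rewrite wd0 scale0r => /eqP; rewrite scaler_eq0 => /orP[|/eqP//].
  rewrite (dnorm_eq0 (@dotmx C n)) subr_eq0 => /eqP ab; apply: d_le.
  rewrite /d ab subrr linear0l add0r.
  by move: bw_le1; rewrite -ab a1 -[X in _ <= X]addr0 lerD2l.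
have ba1 : '[b, a] = 1.
  by move: da0; rewrite linearBl /= a1 => /eqP; rewrite subr_eq0 => /eqP <-.
have ab1 : '[a, b] = 1 by rewrite -dotmx_conj ba1 conjC1.
apply: d_le; rewrite /d (hnormB (@dotmx C n)) /= ab1 conjC1 a1 expr0 mul1r.
have -> : 1 + '[b] - (1 + 1) + '[w] = '[b] + '[w] - 1 by ring.
by rewrite subr_le0.
Qed.

End RankOneDefect.

Lemma ord_down_ind d (P : 'I_d -> Prop) :
  (forall j : 'I_d, (forall m : 'I_d, (j < m)%N -> P m) -> P j) ->
  forall j, P j.
Proof.
move=> step j; have [k] := ubnP (d - j); elim: k j => // k IH j lt_dj.
by apply: step => m lt_jm; apply: IH; move: (ltn_ord m); lia.
Qed.

Section TriangularIsometry.
Context {C : numClosedFieldType} {n d : nat} {T : 'I_n -> 'M[C]_d}.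
Hypothesis T_trig : forall a, is_trig_mx (T a).
Hypothesis T_comm : forall a b, T a *m T b = T b *m T a.
Hypothesis T_isometry : \sum_a (T a)^t* *m T a = 1%:M.

Let entries (k i : 'I_d) : 'rV[C]_n := \row_a T a k i.

Lemma isometry_entries (i j : 'I_d) :
  \sum_k '[entries k j, entries k i] = (i == j)%:R.
Proof.
rewrite (eq_bigr (fun k => \sum_a (T a k i)^* * T a k j)); last first.
  by move=> k _; rewrite dotmxE !mxE; apply: eq_bigr => a _; rewrite !mxE mulrC.
move/matrixP: T_isometry => /(_ i j); rewrite summxE mxE => <-.
rewrite exchange_big; apply: eq_bigr => a _; rewrite mxE.
by apply: eq_bigr => k _; rewrite !mxE.
Qed.

Let offdiag_col_eq0 (m : 'I_d) := forall k, k != m -> entries k m = 0.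

Lemma above_diag_eq0 a {k j : 'I_d} : (k < j)%N -> T a k j = 0.
Proof. by move=> lt_kj; move/is_trig_mxP: (T_trig a) => ->. Qed.

Section InductionStep.
Variables (j k : 'I_d).
Hypothesis lt_jk : (j < k)%N.
Hypothesis IH : forall m : 'I_d, (j < m)%N -> offdiag_col_eq0 m.

Lemma diag_entries_unit : '[entries k k] = 1.
Proof.
have := isometry_entries k k; rewrite eqxx (bigD1 k) //= big1 ?addr0 //.
by move=> m km; rewrite (IH _ lt_jk m km) linear0l.
Qed.

Lemma diag_entries_ortho : '[entries k k, entries k j] = 0.
Proof.
have jk : j != k by rewrite neq_ltn lt_jk.
have := isometry_entries j k; rewrite (negPf jk) (bigD1 k) //= big1 ?addr0 //.
by move=> m km; rewrite (IH _ lt_jk m km) linear0l.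
Qed.

Lemma col_entries_le1 : '[entries j j] + '[entries k j] <= 1.
Proof.
have kj : k != j by rewrite neq_ltn lt_jk orbT.
have := isometry_entries j j; rewrite eqxx mulr1n (bigD1 j) //=.
rewrite (bigD1 k) /=; last by rewrite kj.
move=> <-; rewrite addrA lerDl sumr_ge0 // => m _; exact: (dnorm_ge0 (@dotmx C n)).
Qed.

(* Entries above the diagonal vanish and the columns m > j are diagonal, so
   the (k, j) entry of a product only involves the indices j and k. *)
Lemma prod_entry a b :
  (T a *m T b) k j = T a k j * T b j j + T a k k * T b k j.
Proof.
have kj : k != j by rewrite neq_ltn lt_jk orbT.
rewrite !mxE (bigD1 j) //= (bigD1 k) /=; last by rewrite kj.
rewrite big1 ?addr0 // => m /andP[mj mk].
case: (ltngtP m j) => [lt_mj | lt_jm | /val_inj mj_eq].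
- by rewrite (above_diag_eq0 b lt_mj) mulr0.
- have km : k != m by rewrite eq_sym.
  by have /rowP/(_ a) := IH m lt_jm k km; rewrite !mxE => ->; rewrite mul0r.
- by rewrite mj_eq eqxx in mj.
Qed.

(* Commutativity makes e_kj collinear with e_kk - e_jj, which concludes. *)
Lemma offdiag_entry_eq0 : entries k j = 0.
Proof.
apply: (rank_one_defect_eq0 _ _ _ diag_entries_unit diag_entries_ortho
  col_entries_le1) => a b.
have := congr1 (fun M : 'M_d => M k j) (T_comm a b); rewrite /= !prod_entry !mxE.
move=> comm_kj; apply/eqP; rewrite -subr_eq0; apply/eqP.
transitivity ((T b k j * T a j j + T b k k * T a k j)
              - (T a k j * T b j j + T a k k * T b k j)); first by ring.
by rewrite comm_kj subrr.
Qed.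

End InductionStep.

Lemma trig_isometry_diag a : is_diag_mx (T a).
Proof.
have cols : forall m, offdiag_col_eq0 m.
  apply: ord_down_ind => j IH k kj.
  case: (ltngtP k j) => [lt_kj | lt_jk | /val_inj kj_eq].
  - by apply/rowP => b; rewrite !mxE (above_diag_eq0 b lt_kj).
  - exact: offdiag_entry_eq0.
  - by rewrite kj_eq eqxx in kj.
apply/is_diag_mxP => i j ij.
by have /rowP/(_ a) := cols j i ij; rewrite !mxE.
Qed.

End TriangularIsometry.

Section UnitaryConjugation.
Context {C : numClosedFieldType} {d : nat}.
Variable P : 'M[C]_d.
Hypothesis P_unitary : P \is unitarymx.

Lemma unitary_conjM (A B : 'M[C]_d) :
  (P *m A *m P^t*) *m (P *m B *m P^t*) = P *m (A *m B) *m P^t*.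
Proof. by rewrite !mulmxA mulmxKtV. Qed.

Lemma unitary_conj_adj (A : 'M[C]_d) : (P *m A *m P^t*)^t* = P *m A^t* *m P^t*.
Proof. by rewrite !trmx_mul !map_mxM trmxCK mulmxA. Qed.

Lemma unitary_conjK (A : 'M[C]_d) : P^t* *m (P *m A *m P^t*) *m P = A.
Proof.
by rewrite !mulmxA mulmxKtV // (mulmx1C (unitarymxP P_unitary)) mul1mx.
Qed.

Lemma unitary_conj_gram k (A : 'I_k -> 'M[C]_d) :
  \sum_a (P *m A a *m P^t*)^t* *m (P *m A a *m P^t*)
  = P *m (\sum_a (A a)^t* *m A a) *m P^t*.
Proof.
rewrite mulmx_sumr mulmx_suml; apply: eq_bigr => a _.
by rewrite unitary_conj_adj unitary_conjM.
Qed.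

Section DiagonalConjugate.
Variables (A : 'M[C]_d) (D : 'rV[C]_d).
Hypothesis A_diag : P *m A *m P^t* = diag_mx D.

Lemma diag_conj_normal : A \is normalmx.
Proof.
apply/orthomx_spectral_subproof; exists (P, D) => //=.
by rewrite invmx_unitary // -A_diag unitary_conjK.
Qed.

Lemma diag_conj_eigenvector j : A *m col j (P^t*) = D 0 j *: col j (P^t*).
Proof.
have AP : A *m P^t* = P^t* *m diag_mx D.
  by rewrite -{1}(unitary_conjK A) A_diag -mulmxA (unitarymxP P_unitary) mulmx1.
have -> : A *m col j (P^t*) = col j (P^t* *m diag_mx D) by rewrite !colE mulmxA AP.
by apply/matrixP => i z; rewrite mul_mx_diag !mxE mulrC.
Qed.

End DiagonalConjugate.
End UnitaryConjugation.

Theorem theorem1 (C : numClosedFieldType) (d n : nat) (V : 'I_n -> 'M[C]_d)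
  (hcomm : forall a b : 'I_n, V a *m V b = V b *m V a)
  (hsum : \sum_(a < n) (V a)^t* *m V a = 1%:M) :
  (forall a : 'I_n, V a \is normalmx) /\
  (exists U : 'M[C]_d,
      U ^t* *m U = 1%:M /\
      forall (a : 'I_n) (j : 'I_d), exists lambda : C,
        V a *m col j U = lambda *: col j U).
Proof.
have [P P_unitary P_trig] : exists2 P : 'M[C]_d, P \is unitarymx &
    all [pred A | similar_trig P A] (map V (enum 'I_n)).
  by apply: cotrigonalization => _ _ /mapP[a _ ->] /mapP[b _ ->]; exact: hcomm.
pose T a := P *m V a *m P^t*.
have T_trig a : is_trig_mx (T a).
  have /allP /(_ (V a)) := P_trig; rewrite map_f ?mem_enum //= => /(_ isT).
  by rewrite /similar_to conjymx.
have T_comm a b : T a *m T b = T b *m T a by rewrite !unitary_conjM // hcomm.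
have T_isometry : \sum_a (T a)^t* *m T a = 1%:M.
  by rewrite unitary_conj_gram // hsum mulmx1; exact/unitarymxP.
have T_diag a : exists D, T a = diag_mx D.
  exact/diag_mxP/(trig_isometry_diag T_trig T_comm T_isometry a).
split=> [a | ].
  by have [D TD] := T_diag a; exact: diag_conj_normal TD.
exists (P^t*); split=> [|a j]; first by rewrite trmxCK; exact/unitarymxP.
by have [D TD] := T_diag a; exists (D 0 j); exact: diag_conj_eigenvector TD j.
Qed.
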